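(* For every $p\in\Delta_7$ (not necessarily strictly positive), $p\in\mathcal{M}_{3,3}$ if and only if there exists $i\in\{1,2,3\}$ such that either $d_{i,0}(p)\ge0$ and $d_{i,1}(p)\ge0$, or $d_{i,0}(p)\le0$ and $d_{i,1}(p)\le0$.
   Context: A distribution of three binary random variables is a $2\times2\times2$ tensor $p=(p_{ijk})_{i,j,k\in\{0,1\}}$ with nonnegative entries summing to $1$; the set of these is the simplex $\Delta_7$. For $a,b,c\in\mathbb{R}^2_{\ge0}$, $a\otimes b\otimes c$ is the tensor with entries $a_ib_jc_k$. $\mathcal{M}_{3,3}$ is the set of $p\in\Delta_7$ that are a sum of three tensors of the form $a\otimes b\otimes c$ with $a,b,c\in\mathbb{R}^2_{\ge0}$. The slice determinants are $d_{1,0}=p_{000}p_{011}-p_{001}p_{010}$, $d_{1,1}=p_{100}p_{111}-p_{101}p_{110}$, $d_{2,0}=p_{000}p_{101}-p_{001}p_{100}$, $d_{2,1}=p_{010}p_{111}-p_{011}p_{110}$, $d_{3,0}=p_{000}p_{110}-p_{010}p_{100}$, $d_{3,1}=p_{001}p_{111}-p_{011}p_{101}$. *)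

From Stdlib Require Import Reals.
Open Scope R_scope.

(* A 2x2x2 tensor; index 0 is [false], index 1 is [true]. *)
Definition tensor3 := bool -> bool -> bool -> R.

Definition b2 (n : nat) : bool := Nat.eqb n 1.

Definition ent (p : tensor3) (i j k : nat) : R := p (b2 i) (b2 j) (b2 k).

Definition in_simplex (p : tensor3) : Prop :=
  (forall i j k, 0 <= p i j k) /\
  p false false false + p false false true + p false true false + p false true true +
  p true false false + p true false true + p true true false + p true true true = 1.

Definition nonneg2 (a : bool -> R) : Prop := 0 <= a false /\ 0 <= a true.

Definition outer3 (a b c : bool -> R) : tensor3 := fun i j k => a i * b j * c k.

Definition M33 (p : tensor3) : Prop :=
  in_simplex p /\
  exists a1 b1 c1 a2 b2' c2 a3 b3 c3 : bool -> R,
    nonneg2 a1 /\ nonneg2 b1 /\ nonneg2 c1 /\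
    nonneg2 a2 /\ nonneg2 b2' /\ nonneg2 c2 /\
    nonneg2 a3 /\ nonneg2 b3 /\ nonneg2 c3 /\
    forall i j k, p i j k = outer3 a1 b1 c1 i j k + outer3 a2 b2' c2 i j k
                            + outer3 a3 b3 c3 i j k.

Definition d10 (p : tensor3) := ent p 0 0 0 * ent p 0 1 1 - ent p 0 0 1 * ent p 0 1 0.
Definition d11 (p : tensor3) := ent p 1 0 0 * ent p 1 1 1 - ent p 1 0 1 * ent p 1 1 0.
Definition d20 (p : tensor3) := ent p 0 0 0 * ent p 1 0 1 - ent p 0 0 1 * ent p 1 0 0.
Definition d21 (p : tensor3) := ent p 0 1 0 * ent p 1 1 1 - ent p 0 1 1 * ent p 1 1 0.
Definition d30 (p : tensor3) := ent p 0 0 0 * ent p 1 1 0 - ent p 0 1 0 * ent p 1 0 0.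
Definition d31 (p : tensor3) := ent p 0 0 1 * ent p 1 1 1 - ent p 0 1 1 * ent p 1 0 1.

Definition dslice (i : nat) (e : bool) (p : tensor3) : R :=
  match i, e with
  | 1%nat, false => d10 p | 1%nat, true => d11 p
  | 2%nat, false => d20 p | 2%nat, true => d21 p
  | _, false => d30 p | _, true => d31 p
  end.

From Stdlib Require Import Reals Lra Lia Psatz.
Open Scope R_scope.

(* Forward direction: among three nonnegative vectors of R^2 one lies in the cone spanned
   by the other two.  If the same summand is the middle one in two modes, the two slice
   determinants along the third mode factor as the same product of two 2x2 determinants
   times nonnegative numbers.  If the middle summands of the three modes are pairwise
   distinct, expanding the decomposition writes the slice determinants along mode 1 or
   along mode 2 as a common factor times a quadratic form of constant sign.
   Backward direction: a nonnegative 2x2 matrix with nonnegative determinant is a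
   nonnegative rank-one matrix plus a nonnegative multiple of E_11; doing this on both
   slices gives three terms.  Transposing modes and reversing the third index reduce all
   other sign patterns to this one. *)

Definition same_sign (x y : R) : Prop := (0 <= x /\ 0 <= y) \/ (x <= 0 /\ y <= 0).

Definition slice_condition (p : tensor3) : Prop :=
  exists i : nat, (1 <= i <= 3)%nat /\ same_sign (dslice i false p) (dslice i true p).

Lemma same_sign_scale (K x y : R) : 0 <= x -> 0 <= y -> same_sign (K * x) (K * y).
Proof. intros hx hy; destruct (Rle_lt_dec 0 K); [left | right]; split; nra. Qed.

Lemma quad_form_nonneg (a b c s t : R) :
  0 <= a -> 0 <= b -> 0 <= c -> 0 <= s -> 0 <= t ->
  0 <= a * s * s + b * s * t + c * t * t.
Proof.
  intros; repeat (apply Rplus_le_le_0_compat || apply Rmult_le_pos); assumption.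
Qed.

Definition det2 (u v : bool -> R) : R := u false * v true - u true * v false.

Definition between (u v w : bool -> R) : Prop :=
  exists l m, 0 <= l /\ 0 <= m /\ forall x, v x = l * u x + m * w x.

Lemma between_sym u v w : between u v w -> between w v u.
Proof.
  intros (l & m & hl & hm & h); exists m, l; repeat split; auto.
  intros x; rewrite h; ring.
Qed.

Lemma between_zero u v w : v false = 0 -> v true = 0 -> between u v w.
Proof.
  intros h0 h1; exists 0, 0; repeat split; try lra.
  intros []; [rewrite h1 | rewrite h0]; ring.
Qed.

Lemma between_parallel u v w :
  nonneg2 u -> nonneg2 v -> 0 < u false + u true -> det2 u v = 0 -> between u v w.
Proof.
  intros [u0 u1] [v0 v1] hu hd; unfold det2 in hd.
  exists ((v false + v true) / (u false + u true)), 0; repeat split; try lra.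
  - apply Rmult_le_pos; [lra | left; apply Rinv_0_lt_compat; lra].
  - intros x; apply (Rmult_eq_reg_l (u false + u true)); [| lra].
    destruct x; field_simplify; nra.
Qed.

Lemma between_of_relation u v w (cu cv cw : R) :
  (forall x, cu * u x + cv * v x + cw * w x = 0) ->
  cv <> 0 -> cu * cv <= 0 -> cw * cv <= 0 -> between u v w.
Proof.
  intros rel hv hu hw.
  assert (hsq : 0 < cv * cv) by (destruct (Rtotal_order cv 0) as [? | [? | ?]]; nra).
  exists (- cu / cv), (- cw / cv); repeat split.
  - assert (cv * (- cu / cv) = - cu) by (field; auto); nra.
  - assert (cv * (- cw / cv) = - cw) by (field; auto); nra.
  - intros x; apply (Rmult_eq_reg_l cv); auto.
    field_simplify; auto; specialize (rel x); lra.
Qed.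

Lemma relation_sign_cases (a b c : R) :
  (a <> 0 /\ b * a <= 0 /\ c * a <= 0) \/ (b <> 0 /\ a * b <= 0 /\ c * b <= 0) \/
  (c <> 0 /\ a * c <= 0 /\ b * c <= 0) \/ (0 <= a * c /\ 0 <= b * c).
Proof.
  destruct (Req_dec c 0) as [-> | hc]; [right; right; right; split; lra |].
  destruct (Rle_lt_dec 0 (a * c)), (Rle_lt_dec 0 (b * c)).
  - right; right; right; split; lra.
  - right; left; assert (a * b * (c * c) <= 0) by nra.
    split; [intros ->; lra | split; nra].
  - left; assert (a * b * (c * c) <= 0) by nra.
    split; [intros ->; lra | split; nra].
  - right; right; left; repeat split; lra.
Qed.

Lemma nonneg2_zero_or_pos u : nonneg2 u -> (u false = 0 /\ u true = 0) \/ 0 < u false + u true.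
Proof.
  intros [u0 u1]; destruct (Rle_lt_or_eq_dec 0 _ (Rplus_le_le_0_compat _ _ u0 u1));
    [right | left]; lra.
Qed.

Lemma middle_of_three u v w : nonneg2 u -> nonneg2 v -> nonneg2 w ->
  between v u w \/ between u v w \/ between u w v.
Proof.
  intros hu hv hw.
  destruct (nonneg2_zero_or_pos u hu) as [[] | upos]; [left; now apply between_zero |].
  destruct (nonneg2_zero_or_pos v hv) as [[] | vpos]; [right; left; now apply between_zero |].
  destruct (nonneg2_zero_or_pos w hw) as [[] | wpos]; [right; right; now apply between_zero |].
  assert (rel : forall x, det2 v w * u x + - det2 u w * v x + det2 u v * w x = 0)
    by (intros []; unfold det2; ring).
  destruct (relation_sign_cases (det2 v w) (- det2 u w) (det2 u v))
    as [[h1 [h2 h3]] | [[h1 [h2 h3]] | [[h1 [h2 h3]] | [h1 h2]]]].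
  - left; apply (between_of_relation v u w (- det2 u w) (det2 v w) (det2 u v)); auto.
    intros x; rewrite <- (rel x); ring.
  - right; left; now apply (between_of_relation u v w (det2 v w) (- det2 u w) (det2 u v)).
  - right; right; apply (between_of_relation u w v (det2 v w) (det2 u v) (- det2 u w)); auto.
    intros x; rewrite <- (rel x); ring.
  - right; left; apply between_parallel; auto.
    (* multiplying the relation by [det2 u v] shows [det2 u v ^ 2 * (w0 + w1) <= 0] *)
    assert (hc : forall x, 0 <= u x -> 0 <= v x -> det2 u v * det2 u v * w x <= 0).
    { intros x hux hvx.
      assert (det2 u v * (det2 v w * u x + - det2 u w * v x + det2 u v * w x) = 0)
        by (rewrite rel; ring).
      assert (0 <= det2 v w * det2 u v * u x) by (apply Rmult_le_pos; auto).
      assert (0 <= - det2 u w * det2 u v * v x) by (apply Rmult_le_pos; auto).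
      nra. }
    destruct hu as [u0 u1], hv as [v0 v1].
    pose proof (hc false u0 v0); pose proof (hc true u1 v1).
    assert (hsq : det2 u v * det2 u v <= 0) by nra.
    apply Rsqr_0_uniq, Rle_antisym; [exact hsq | apply Rle_0_sqr].
Qed.

Record rank_one : Type := Rank1 { ra : bool -> R; rb : bool -> R; rc : bool -> R }.

Definition term (t : rank_one) : tensor3 := outer3 (ra t) (rb t) (rc t).

Definition nonneg_rank_one (t : rank_one) : Prop :=
  nonneg2 (ra t) /\ nonneg2 (rb t) /\ nonneg2 (rc t).

Definition sum3 (p : tensor3) (t1 t2 t3 : rank_one) : Prop :=
  forall i j k, p i j k = term t1 i j k + term t2 i j k + term t3 i j k.

Definition nonneg_rank3 (p : tensor3) : Prop :=
  exists t1 t2 t3, nonneg_rank_one t1 /\ nonneg_rank_one t2 /\ nonneg_rank_one t3 /\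
    sum3 p t1 t2 t3.

Lemma M33_iff p : M33 p <-> in_simplex p /\ nonneg_rank3 p.
Proof.
  split.
  - intros [hp (a1 & b1 & c1 & a2 & b2 & c2 & a3 & b3 & c3 & h1 & h2 & h3 & h4 & h5 & h6
                & h7 & h8 & h9 & h)].
    split; [exact hp |].
    exists (Rank1 a1 b1 c1), (Rank1 a2 b2 c2), (Rank1 a3 b3 c3).
    unfold nonneg_rank_one; simpl; repeat (split; [tauto |]); exact h.
  - intros [hp ([a1 b1 c1] & [a2 b2 c2] & [a3 b3 c3] & (h1 & h2 & h3) & (h4 & h5 & h6)
                & (h7 & h8 & h9) & h)].
    split; [exact hp |].
    exists a1, b1, c1, a2, b2, c2, a3, b3, c3.
    simpl in *; repeat (split; [assumption |]); exact h.
Qed.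

Lemma sum3_perm12 p t1 t2 t3 : sum3 p t1 t2 t3 -> sum3 p t2 t1 t3.
Proof. intros h i j k; rewrite h; ring. Qed.

Lemma sum3_perm23 p t1 t2 t3 : sum3 p t1 t2 t3 -> sum3 p t1 t3 t2.
Proof. intros h i j k; rewrite h; ring. Qed.

Lemma sum3_perm13 p t1 t2 t3 : sum3 p t1 t2 t3 -> sum3 p t3 t2 t1.
Proof. intros h i j k; rewrite h; ring. Qed.

Definition tr12 (p : tensor3) : tensor3 := fun i j k => p j i k.
Definition tr13 (p : tensor3) : tensor3 := fun i j k => p k j i.
Definition flip3 (p : tensor3) : tensor3 := fun i j k => p i j (negb k).

Definition tr12_r (t : rank_one) : rank_one := Rank1 (rb t) (ra t) (rc t).
Definition tr13_r (t : rank_one) : rank_one := Rank1 (rc t) (rb t) (ra t).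

Lemma sum3_tr12 p t1 t2 t3 :
  sum3 p t1 t2 t3 -> sum3 (tr12 p) (tr12_r t1) (tr12_r t2) (tr12_r t3).
Proof. intros h i j k; unfold tr12; rewrite h; unfold term, outer3; simpl; ring. Qed.

Lemma sum3_tr13 p t1 t2 t3 :
  sum3 p t1 t2 t3 -> sum3 (tr13 p) (tr13_r t1) (tr13_r t2) (tr13_r t3).
Proof. intros h i j k; unfold tr13; rewrite h; unfold term, outer3; simpl; ring. Qed.

Lemma nonneg_rank3_tr12 p : nonneg_rank3 (tr12 p) -> nonneg_rank3 p.
Proof.
  intros (t1 & t2 & t3 & h1 & h2 & h3 & h).
  exists (tr12_r t1), (tr12_r t2), (tr12_r t3).
  unfold nonneg_rank_one in *; simpl; repeat (split; [tauto |]).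
  exact (sum3_tr12 _ _ _ _ h).
Qed.

Lemma nonneg_rank3_tr13 p : nonneg_rank3 (tr13 p) -> nonneg_rank3 p.
Proof.
  intros (t1 & t2 & t3 & h1 & h2 & h3 & h).
  exists (tr13_r t1), (tr13_r t2), (tr13_r t3).
  unfold nonneg_rank_one in *; simpl; repeat (split; [tauto |]).
  exact (sum3_tr13 _ _ _ _ h).
Qed.

Lemma nonneg_rank3_flip3 p : nonneg_rank3 (flip3 p) -> nonneg_rank3 p.
Proof.
  intros (t1 & t2 & t3 & h1 & h2 & h3 & h).
  pose (fl t := Rank1 (ra t) (rb t) (fun k => rc t (negb k))).
  exists (fl t1), (fl t2), (fl t3).
  unfold nonneg_rank_one, nonneg2 in *; simpl; repeat split; try tauto.
  intros i j k; specialize (h i j (negb k)); unfold flip3 in h.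
  rewrite Bool.negb_involutive in h; rewrite h; reflexivity.
Qed.

(* [d10 p] and [d11 p] are [slice_det p false] and [slice_det p true] up to conversion. *)
Definition slice_det (p : tensor3) (x : bool) : R :=
  p x false false * p x true true - p x false true * p x true false.

Lemma slice_det_flip3 p x : slice_det (flip3 p) x = - slice_det p x.
Proof. unfold slice_det, flip3; simpl; ring. Qed.

Lemma slice_condition_of_slice_det p :
  same_sign (slice_det p false) (slice_det p true) -> slice_condition p.
Proof. intros h; exists 1%nat; split; [lia | exact h]. Qed.

(* Like [dslice], these read every index other than 1 and 2 as 3. *)
Definition mode12 (i : nat) : nat := match i with 1 => 2 | 2 => 1 | _ => 3 end.
Definition mode13 (i : nat) : nat := match i with 1 => 3 | 2 => 2 | _ => 1 end.

Lemma dslice_tr12 p i e : dslice i e (tr12 p) = dslice (mode12 i) e p.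
Proof.
  destruct i as [| [| [| i]]], e;
    unfold dslice, mode12, d10, d11, d20, d21, d30, d31, ent, tr12; simpl; ring.
Qed.

Lemma dslice_tr13 p i e : dslice i e (tr13 p) = dslice (mode13 i) e p.
Proof.
  destruct i as [| [| [| i]]], e;
    unfold dslice, mode13, d10, d11, d20, d21, d30, d31, ent, tr13; simpl; ring.
Qed.

Lemma slice_condition_tr12 p : slice_condition (tr12 p) -> slice_condition p.
Proof.
  intros (i & hi & h); exists (mode12 i); rewrite <- !dslice_tr12; split; [| exact h].
  destruct i as [| [| [| [| i]]]]; simpl; lia.
Qed.

Lemma slice_condition_tr13 p : slice_condition (tr13 p) -> slice_condition p.
Proof.
  intros (i & hi & h); exists (mode13 i); rewrite <- !dslice_tr13; split; [| exact h].
  destruct i as [| [| [| [| i]]]]; simpl; lia.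
Qed.

Lemma slice_condition_of_between_bc p t1 t2 t3 :
  sum3 p t1 t2 t3 -> nonneg2 (ra t1) -> nonneg2 (ra t2) -> nonneg2 (ra t3) ->
  between (rb t1) (rb t2) (rb t3) -> between (rc t1) (rc t2) (rc t3) -> slice_condition p.
Proof.
  intros h [a10 a11] [a20 a21] [a30 a31] (l & m & hl & hm & hb) (l' & m' & hl' & hm' & hc).
  assert (factor : forall x, slice_det p x =
    det2 (rb t1) (rb t3) * det2 (rc t1) (rc t3) *
    (ra t1 x * ra t3 x + ra t2 x * (ra t1 x * m * m' + ra t3 x * l * l'))).
  { intros x; unfold slice_det, det2; rewrite !h; unfold term, outer3; rewrite !hb, !hc; ring. }
  apply slice_condition_of_slice_det; rewrite !factor; apply same_sign_scale;
    repeat (apply Rplus_le_le_0_compat || apply Rmult_le_pos); assumption.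
Qed.

Lemma slice_condition_of_between_ac p t1 t2 t3 :
  sum3 p t1 t2 t3 -> nonneg2 (rb t1) -> nonneg2 (rb t2) -> nonneg2 (rb t3) ->
  between (ra t1) (ra t2) (ra t3) -> between (rc t1) (rc t2) (rc t3) -> slice_condition p.
Proof.
  intros; apply slice_condition_tr12.
  apply (slice_condition_of_between_bc _ (tr12_r t1) (tr12_r t2) (tr12_r t3));
    auto using sum3_tr12.
Qed.

Lemma slice_condition_of_between_ab p t1 t2 t3 :
  sum3 p t1 t2 t3 -> nonneg2 (rc t1) -> nonneg2 (rc t2) -> nonneg2 (rc t3) ->
  between (ra t1) (ra t2) (ra t3) -> between (rb t1) (rb t2) (rb t3) -> slice_condition p.
Proof.
  intros; apply slice_condition_tr13.
  apply (slice_condition_of_between_bc _ (tr13_r t1) (tr13_r t2) (tr13_r t3));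
    auto using sum3_tr13.
Qed.

Lemma slice_condition_of_distinct_middles p t1 t2 t3 :
  sum3 p t1 t2 t3 -> nonneg2 (ra t1) -> nonneg2 (ra t3) -> nonneg2 (rb t2) -> nonneg2 (rb t3) ->
  between (ra t1) (ra t2) (ra t3) -> between (rb t2) (rb t1) (rb t3) ->
  between (rc t1) (rc t3) (rc t2) -> slice_condition p.
Proof.
  intros h [a10 a11] [a30 a31] [b20 b21] [b30 b31]
    (l & m & hl & hm & ha) (l1 & m1 & hl1 & hm1 & hb) (l2 & m2 & hl2 & hm2 & hc).
  destruct (Rle_lt_dec (l1 * m2) (l * l2 + m * m1)).
  - apply slice_condition_of_slice_det.
    assert (factor : forall x, slice_det p x =
      - (det2 (rb t2) (rb t3) * det2 (rc t1) (rc t2)) *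
      (l * m1 * ra t1 x * ra t1 x + (l * l2 + m * m1 - l1 * m2) * ra t1 x * ra t3 x
       + m * l2 * ra t3 x * ra t3 x)).
    { intros x; unfold slice_det, det2; rewrite !h; unfold term, outer3;
        rewrite !ha, !hb, !hc; ring. }
    rewrite !factor; apply same_sign_scale; apply quad_form_nonneg; auto; nra.
  - apply slice_condition_tr12, slice_condition_of_slice_det.
    assert (factor : forall x, slice_det (tr12 p) x =
      det2 (ra t1) (ra t3) * det2 (rc t1) (rc t2) *
      (l1 * m * rb t2 x * rb t2 x + (l1 * m2 + m * m1 - l * l2) * rb t2 x * rb t3 x
       + m1 * m2 * rb t3 x * rb t3 x)).
    { intros x; unfold slice_det, det2, tr12; rewrite !h; unfold term, outer3;
        rewrite !ha, !hb, !hc; ring. }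
    assert (0 <= m * m1) by nra.
    rewrite !factor; apply same_sign_scale; apply quad_form_nonneg; auto; nra.
Qed.

Lemma slice_condition_of_between_a p t1 t2 t3 :
  sum3 p t1 t2 t3 -> nonneg_rank_one t1 -> nonneg_rank_one t2 -> nonneg_rank_one t3 ->
  between (ra t1) (ra t2) (ra t3) -> slice_condition p.
Proof.
  intros h (a1 & b1 & c1) (a2 & b2 & c2) (a3 & b3 & c3) ha.
  destruct (middle_of_three _ _ _ b1 b2 b3) as [hb | [hb | hb]];
    [| now apply (slice_condition_of_between_ab p t1 t2 t3) |];
    destruct (middle_of_three _ _ _ c1 c2 c3) as [hc | [hc | hc]];
    try now apply (slice_condition_of_between_ac p t1 t2 t3).
  - apply (slice_condition_of_between_bc p t2 t1 t3); auto; now apply sum3_perm12.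
  - now apply (slice_condition_of_distinct_middles p t1 t2 t3).
  - apply (slice_condition_of_distinct_middles p t3 t2 t1); auto using between_sym.
    now apply sum3_perm13.
  - apply (slice_condition_of_between_bc p t1 t3 t2); auto; now apply sum3_perm23.
Qed.

Lemma slice_condition_of_nonneg_rank3 p : nonneg_rank3 p -> slice_condition p.
Proof.
  intros (t1 & t2 & t3 & h1 & h2 & h3 & h).
  destruct h1 as [a1 h1'], h2 as [a2 h2'], h3 as [a3 h3'].
  destruct (middle_of_three _ _ _ a1 a2 a3) as [ha | [ha | ha]].
  - apply (slice_condition_of_between_a p t2 t1 t3); try split; auto.
    now apply sum3_perm12.
  - apply (slice_condition_of_between_a p t1 t2 t3); try split; auto.
  - apply (slice_condition_of_between_a p t1 t3 t2); try split; auto.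
    now apply sum3_perm23.
Qed.

Lemma nonneg_matrix2_decomp (M : bool -> bool -> R) :
  (forall j k, 0 <= M j k) -> 0 <= M false false * M true true - M false true * M true false ->
  exists u v e, nonneg2 u /\ nonneg2 v /\ 0 <= e /\
    forall j k, M j k = u j * v k + (if andb j k then e else 0).
Proof.
  intros hM hdet; unfold nonneg2.
  pose proof (hM false false); pose proof (hM false true);
    pose proof (hM true false); pose proof (hM true true).
  destruct (Rlt_le_dec 0 (M false false)).
  - exists (fun j : bool => if j then M true false / M false false else 1),
      (fun k : bool => M false k),
      ((M false false * M true true - M false true * M true false) / M false false).
    repeat split; simpl; try lra;
      try (apply Rmult_le_pos; [lra | left; apply Rinv_0_lt_compat; lra]).
    intros [] []; simpl; field; lra.
  - assert (hprod : M false true * M true false = 0) by nra.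
    destruct (Rmult_integral _ _ hprod) as [h0 | h0].
    + exists (fun j : bool => if j then 1 else 0), (fun k : bool => M true k), 0.
      repeat split; simpl; try lra.
      intros [] []; simpl; lra.
    + exists (fun j : bool => M j true), (fun k : bool => if k then 1 else 0), 0.
      repeat split; simpl; try lra.
      intros [] []; simpl; lra.
Qed.

Lemma nonneg_rank3_of_slice_det_nonneg p : (forall i j k, 0 <= p i j k) ->
  0 <= slice_det p false -> 0 <= slice_det p true -> nonneg_rank3 p.
Proof.
  intros hp h0 h1.
  destruct (nonneg_matrix2_decomp (p false)) as (u0 & v0 & e0 & hu0 & hv0 & he0 & hd0); auto.
  destruct (nonneg_matrix2_decomp (p true)) as (u1 & v1 & e1 & hu1 & hv1 & he1 & hd1); auto.
  exists (Rank1 (fun i : bool => if i then 0 else 1) u0 v0),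
    (Rank1 (fun i : bool => if i then 1 else 0) u1 v1),
    (Rank1 (fun i : bool => if i then e1 else e0)
       (fun j : bool => if j then 1 else 0) (fun k : bool => if k then 1 else 0)).
  unfold nonneg_rank_one, nonneg2; simpl; repeat split; try lra; try apply hu0; try apply hv0;
    try apply hu1; try apply hv1.
  intros [] j k; [rewrite hd1 | rewrite hd0]; unfold term, outer3; simpl;
    destruct j, k; simpl; ring.
Qed.

Lemma nonneg_rank3_of_same_sign_slice_det p : (forall i j k, 0 <= p i j k) ->
  same_sign (slice_det p false) (slice_det p true) -> nonneg_rank3 p.
Proof.
  intros hp [[h0 h1] | [h0 h1]].
  - now apply nonneg_rank3_of_slice_det_nonneg.
  - apply nonneg_rank3_flip3, nonneg_rank3_of_slice_det_nonneg;
      [intros; apply hp | rewrite slice_det_flip3; lra ..].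
Qed.

Lemma nonneg_rank3_of_slice_condition p :
  (forall i j k, 0 <= p i j k) -> slice_condition p -> nonneg_rank3 p.
Proof.
  intros hp (i & hi & h).
  destruct i as [| [| [| [| i]]]]; try lia.
  - now apply nonneg_rank3_of_same_sign_slice_det.
  - apply nonneg_rank3_tr12, nonneg_rank3_of_same_sign_slice_det; [intros; apply hp |].
    change (same_sign (dslice 1 false (tr12 p)) (dslice 1 true (tr12 p))).
    now rewrite !dslice_tr12.
  - apply nonneg_rank3_tr13, nonneg_rank3_of_same_sign_slice_det; [intros; apply hp |].
    change (same_sign (dslice 1 false (tr13 p)) (dslice 1 true (tr13 p))).
    now rewrite !dslice_tr13.
Qed.

Theorem corollary3 (p : tensor3) (hp : in_simplex p) :
  M33 p <->
  exists i : nat, (1 <= i <= 3)%nat /\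
    ((0 <= dslice i false p /\ 0 <= dslice i true p) \/
     (dslice i false p <= 0 /\ dslice i true p <= 0)).
Proof.
  split.
  - intros hM; apply M33_iff in hM as [_ hdec].
    exact (slice_condition_of_nonneg_rank3 p hdec).
  - intros hcond; apply M33_iff; split; [exact hp |].
    apply nonneg_rank3_of_slice_condition; [apply hp | exact hcond].
Qed.
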